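(* Let $q\ge2$, $A\in\mathbb{R}_{\geq0}^{q\times q}$, and let $V$ be the value of the one-shot two-player zero-sum game defined by $A$. Then there exists a randomized algorithm $R$ without advice for the repeated matrix game with cost matrix $A$ such that $\mathbb{E}[R(\sigma)]\leq Vn$ for every input $\sigma$ of length $n$. Furthermore, there exists a deterministic algorithm $\mathrm{ALG}$ reading $\lceil\log_2 q\rceil$ bits of advice such that $\mathrm{ALG}(\sigma)\leq Vn$ for every input $\sigma$ of length $n$.
   Context: The one-shot game defined by $A$: the row player picks $x\in[q]$, the column player picks $y\in[q]$, and the column player pays $A(x,y)$; $V=\max_\mu\min_\nu\mathbb{E}_{x\sim\mu,y\sim\nu}A(x,y)$ over mixed strategies. The repeated matrix game with cost matrix $A$: inputs $\sigma=(n,x_1,\dots,x_n)$ with $x_i\in[q]$; in round $i$ the algorithm learns $n$ (if $i=1$) or $x_{i-1}$ (if $i>1$) and answers $y_i\in[q]$ depending only on $n,x_1,\dots,x_{i-1}$ (and advice/randomness); cost $\sum_{i}A(x_i,y_i)$; $n$ is called the length. Advice is read from an infinite tape prepared by an oracle knowing the whole input. *)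

From HB Require Import structures.
From mathcomp Require Import all_boot all_order all_algebra.
From mathcomp Require Import classical_sets reals.
Set Implicit Arguments. Unset Strict Implicit. Unset Printing Implicit Defensive.
Import Order.TTheory GRing.Theory Num.Theory.
Local Open Scope ring_scope.
Local Open Scope classical_set_scope.

Section Defs.
Variables (R : realType) (q : nat).

Definition mixed (mu : {ffun 'I_q -> R}) : Prop :=
  (forall i, 0 <= mu i) /\ \sum_i mu i = 1.

Definition payoff (A : 'M[R]_q) (mu nu : {ffun 'I_q -> R}) : R :=
  \sum_x \sum_y mu x * nu y * A x y.

Definition game_value (A : 'M[R]_q) : R :=
  sup ((fun mu => inf ((fun nu => payoff A mu nu) @` [set nu | mixed nu]))
         @` [set mu | mixed mu]).

(** Deterministic online algorithm without advice:
    y_i = alg n [x_1; ...; x_{i-1}]. *)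
Definition det_alg := nat -> seq 'I_q -> 'I_q.

Definition cost (A : 'M[R]_q) (alg : det_alg) (n : nat) (xs : n.-tuple 'I_q) : R :=
  \sum_(i < n) A (tnth xs i) (alg n (take i xs)).

(** Randomized algorithm without advice: a probability distribution
    (over a finite sample space) on deterministic algorithms. *)
Record rand_alg := RandAlg {
  ra_space : finType;
  ra_prob : ra_space -> R;
  ra_det : ra_space -> det_alg;
  ra_prob_ge0 : forall w, 0 <= ra_prob w;
  ra_prob_sum : \sum_(w : ra_space) ra_prob w = 1 }.

Definition exp_cost (A : 'M[R]_q) (RA : rand_alg) (n : nat) (xs : n.-tuple 'I_q) : R :=
  \sum_(w : ra_space RA) ra_prob w * cost A (ra_det w) xs.

(** Deterministic algorithm with advice read from an infinite tape. *)
Definition adv_alg := (nat -> bool) -> det_alg.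

Definition reads_at_most (b : nat) (alg : adv_alg) : Prop :=
  forall t t' : nat -> bool, (forall k, (k < b)%N -> t k = t' k) -> alg t = alg t'.

End Defs.

From HB Require Import structures.
From mathcomp Require Import all_boot all_order all_algebra.
From mathcomp Require Import classical_sets reals.
From mathcomp Require Import ring lra.
Set Implicit Arguments. Unset Strict Implicit. Unset Printing Implicit Defensive.
Import Order.TTheory GRing.Theory Num.Theory.
Local Open Scope ring_scope.

(** By Ville's alternative, proved by eliminating the columns one at a time (Fourier-Motzkin),
    the column player has a mixed strategy [nu] paying at most [V] in expectation against every
    pure row. Drawing one column from [nu] and playing it in every round therefore costs at most
    [V n] in expectation on any input of length [n]. As this expectation averages the costs of
    the constant algorithms, on a given input some fixed column costs at most [V n]; the oracle
    writes that column in binary, using [up_log 2 q] bits. *)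

Section VilleAlternative.
Variable R : realFieldType.

Lemma sum_delta (I : finType) (k : I) (F : I -> R) : \sum_i (i == k)%:R * F i = F k.
Proof.
by rewrite (bigD1 k) //= eqxx mul1r big1 ?addr0 // => i /negbTE ->; rewrite mul0r.
Qed.

Lemma affine_ineqs_solvable (I : finType) (a S : I -> R) :
  (forall i, 0 <= a i -> S i <= 0) ->
  (forall i k, 0 < a i -> a k < 0 -> S i * - a k + S k * a i <= 0) ->
  exists2 t, 0 <= t & forall i, S i + a i * t <= 0.
Proof.
move=> S_le0 S_pair.
(* [t] is the largest lower bound [S k / - a k] imposed by a row with [a k < 0]. *)
exists (\big[Num.max/0]_(k | a k < 0) (S k / - a k)) => [|i]; first exact: bigmax_ge_id.
case: (ltrgtP (a i) 0) => [ai_lt0|ai_gt0|ai0].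
- have := @le_bigmax_cond _ _ _ 0 i (fun k => a k < 0) (fun k => S k / - a k) ai_lt0.
  by rewrite ler_pdivrMr ?oppr_gt0 //; nra.
- suff: \big[Num.max/0]_(k | a k < 0) (S k / - a k) <= - S i / a i.
    by rewrite ler_pdivlMr //; nra.
  apply: bigmax_le => [|k ak_lt0].
    by rewrite divr_ge0 ?(ltW ai_gt0) // oppr_ge0 S_le0 // ltW.
  rewrite ler_pdivrMr ?oppr_gt0 // mulrAC ler_pdivlMr //.
  by have := S_pair i k ai_gt0 ak_lt0; nra.
- by rewrite ai0 mul0r addr0 S_le0 ?ai0.
Qed.

Lemma raise_column (I : finType) m (A : I -> 'I_m -> R) (mu : I -> R) (p : I) (c : 'I_m) :
  (forall i, 0 <= mu i) -> 0 < A p c ->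
  0 <= \sum_i mu i * A i c -> (forall j, j != c -> 1 <= \sum_i mu i * A i j) ->
  exists mu', (forall i, 0 <= mu' i) /\ forall j, 1 <= \sum_i mu' i * A i j.
Proof.
move=> mu_ge0 Apc_gt0 col_c cols.
(* Adding row [p] fixes column [c]; scaling [mu] by [K] absorbs the negative entries of row [p]. *)
pose K := 1 + \sum_j `|A p j| / A p c.
have K_ge1 j : 1 + `|A p j| / A p c <= K.
  rewrite lerD2l (bigD1 j) //= lerDl.
  by apply: sumr_ge0 => k _; rewrite divr_ge0 // ltW.
have K_ge0 : 0 <= K.
  by apply: le_trans _ (K_ge1 c); rewrite addr_ge0 ?divr_ge0 ?(ltW Apc_gt0).
exists (fun i => K * mu i + (i == p)%:R / A p c); split => [i|j].
  by apply: addr_ge0; [apply: mulr_ge0 | apply: divr_ge0; rewrite ?ler0n ?(ltW Apc_gt0)].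
under eq_bigr do rewrite mulrDl -mulrA mulrAC.
rewrite big_split /= -mulr_sumr -mulr_suml sum_delta.
have Apj_ge : - `|A p j| / A p c <= A p j / A p c.
  by rewrite ler_pM2r ?invr_gt0 // lerNl -normrN ler_norm.
case: (eqVneq j c) => [->|/cols col_j].
  by rewrite divff ?gt_eqF // lerDr mulr_ge0.
have := ler_wpM2l K_ge0 col_j; have := K_ge1 j; lra.
Qed.

Lemma widen_ord_lift_max n (j : 'I_n) : widen_ord (leqnSn n) j = lift ord_max j.
Proof. by apply: ord_inj; rewrite lift_max. Qed.

Section FourierMotzkin.
Variables (n : nat) (I : finType) (A : I -> 'I_n.+1 -> R).

(* Fourier-Motzkin elimination of the last variable: the eliminated system consists of the rows
   with nonnegative last coefficient (combined with the sign constraint on that variable) and,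
   for every pair of rows whose last coefficients have opposite signs, the combination of the
   two cancelling that coefficient. *)
Definition fm_coef (r : I + I * I) (i : I) : R :=
  match r with
  | inl k => (0 <= A k ord_max)%R%:R * (i == k)%:R
  | inr (k, l) => ((0 < A k ord_max) && (A l ord_max < 0))%R%:R *
                  ((i == k)%:R * - A l ord_max + (i == l)%:R * A k ord_max)
  end.

Definition fm_elim (r : I + I * I) (j : 'I_n) : R :=
  \sum_i fm_coef r i * A i (widen_ord (leqnSn n) j).

Lemma fm_coef_ge0 r i : 0 <= fm_coef r i.
Proof.
case: r => [k|[k l]] /=; first by rewrite mulr_ge0 ?ler0n.
case: andP => [[Akc_gt0 Alc_lt0]|_]; last by rewrite mul0r.
by rewrite mul1r addr_ge0 ?mulr_ge0 ?ler0n ?oppr_ge0 ?(ltW Akc_gt0) ?(ltW Alc_lt0).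
Qed.

Lemma fm_combE (F : I -> R) r :
  \sum_i fm_coef r i * F i =
  match r with
  | inl k => (0 <= A k ord_max)%R%:R * F k
  | inr (k, l) => ((0 < A k ord_max) && (A l ord_max < 0))%R%:R *
                  (F k * - A l ord_max + F l * A k ord_max)
  end.
Proof.
case: r => [k|[k l]] /=.
  by under eq_bigr do rewrite -mulrA; rewrite -mulr_sumr sum_delta.
under eq_bigr do rewrite -mulrA mulrDl -!mulrA.
by rewrite -mulr_sumr big_split /= !sum_delta [F k * _]mulrC [F l * _]mulrC.
Qed.

Lemma fm_lift_solution (nu : 'I_n -> R) :
  (forall j, 0 <= nu j) -> \sum_j nu j = 1 ->
  (forall r, \sum_j fm_elim r j * nu j <= 0) ->
  exists nu' : 'I_n.+1 -> R,
    [/\ forall j, 0 <= nu' j, \sum_j nu' j = 1 & forall i, \sum_j A i j * nu' j <= 0].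
Proof.
move=> nu_ge0 nu_sum elim_le0.
pose S i := \sum_j A i (widen_ord (leqnSn n) j) * nu j.
have elimE r : \sum_j fm_elim r j * nu j = \sum_i fm_coef r i * S i.
  under [RHS]eq_bigr do rewrite mulr_sumr; rewrite exchange_big /=.
  by apply: eq_bigr => j _; rewrite mulr_suml; apply: eq_bigr => i _; rewrite mulrA.
have [t t_ge0 St_le0] : exists2 t, 0 <= t & forall i, S i + A i ord_max * t <= 0.
  apply: affine_ineqs_solvable => [i Aic_ge0|i k Aic_gt0 Akc_lt0].
    by have := elim_le0 (inl i); rewrite elimE fm_combE Aic_ge0 mul1r.
  by have := elim_le0 (inr (i, k)); rewrite elimE fm_combE Aic_gt0 Akc_lt0 mul1r.
pose ext j := if unlift ord_max j is Some j' then nu j' else t.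
have sum_ext G : \sum_j G j * ext j
                 = \sum_j G (widen_ord (leqnSn n) j) * nu j + G ord_max * t.
  rewrite big_ord_recr /= /ext unlift_none; congr (_ + _).
  by apply: eq_bigr => j _; rewrite widen_ord_lift_max liftK.
have t1_gt0 : 0 < 1 + t by lra.
exists (fun j => ext j / (1 + t)); split => [j||i].
- by rewrite divr_ge0 ?(ltW t1_gt0) // /ext; case: unlift.
- rewrite -mulr_suml (eq_bigr (fun j => 1 * ext j)) => [|j _]; last by rewrite mul1r.
  rewrite (sum_ext (fun _ => 1)); under eq_bigr do rewrite mul1r.
  by rewrite nu_sum mul1r divff ?gt_eqF.
- under eq_bigr do rewrite mulrA; rewrite -mulr_suml sum_ext.
  by rewrite mulr_le0_ge0 ?invr_ge0 ?(ltW t1_gt0) ?St_le0.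
Qed.

Lemma fm_lift_certificate (mu : I + I * I -> R) :
  (forall r, 0 <= mu r) -> (forall j, 1 <= \sum_r mu r * fm_elim r j) ->
  (exists p, 0 < A p ord_max) ->
  exists mu' : I -> R, (forall i, 0 <= mu' i) /\ forall j, 1 <= \sum_i mu' i * A i j.
Proof.
move=> mu_ge0 mu_elim [p Apc_gt0].
pose mu' i := \sum_r mu r * fm_coef r i.
have mu'E j : \sum_i mu' i * A i j = \sum_r mu r * \sum_i fm_coef r i * A i j.
  under eq_bigr do rewrite mulr_suml; rewrite exchange_big /=.
  by apply: eq_bigr => r _; rewrite mulr_sumr; apply: eq_bigr => i _; rewrite mulrA.
apply: (@raise_column _ _ A mu' p ord_max) => // [i||j].
- by apply: sumr_ge0 => r _; rewrite mulr_ge0 ?fm_coef_ge0.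
- rewrite mu'E; apply: sumr_ge0 => r _; rewrite mulr_ge0 // fm_combE.
  case: r => [k|[k l]]; first by case: (lerP 0 (A k ord_max)) => Akc; rewrite ?mul1r ?mul0r.
  by rewrite mulrN [A l _ * _]mulrC addNr mulr0.
- case: (unliftP ord_max j) => [j' ->|->]; last by rewrite eqxx.
  by move=> _; rewrite mu'E -widen_ord_lift_max; apply: mu_elim.
Qed.

End FourierMotzkin.

Theorem ville_alternative n (I : finType) (A : I -> 'I_n -> R) :
  (exists nu : 'I_n -> R,
     [/\ forall j, 0 <= nu j, \sum_j nu j = 1 & forall i, \sum_j A i j * nu j <= 0])
  \/ (exists mu : I -> R, (forall i, 0 <= mu i) /\ forall j, 1 <= \sum_i mu i * A i j).
Proof.
elim: n => [|n IH] in I A *; first by right; exists (fun _ => 0); split => // -[].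
have [Ac_le0|Ac_pos] : (forall i, A i ord_max <= 0) \/ exists p, 0 < A p ord_max.
  case: (boolP [forall i, A i ord_max <= 0]) => [/forallP|]; first by left.
  by rewrite negb_forall => /existsP [p]; rewrite -ltNge; right; exists p.
- left; exists (fun j => (j == ord_max)%:R); split => [j||i].
  + exact: ler0n.
  + by rewrite (eq_bigr (fun j => (j == ord_max)%:R * 1)) ?sum_delta // => j _; rewrite mulr1.
  + by under eq_bigr do rewrite mulrC; rewrite sum_delta; apply: Ac_le0.
- case: (IH _ (fm_elim A)) => [[nu [nu_ge0 nu_sum elim_le0]]|[mu [mu_ge0 mu_elim]]].
  + by left; apply: fm_lift_solution.
  + by right; apply: fm_lift_certificate.
Qed.

End VilleAlternative.

Local Open Scope classical_set_scope.

Section GameValue.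
Variables (R : realType) (q : nat) (A : 'M[R]_q).
Hypotheses (A_ge0 : forall x y, 0 <= A x y) (q_gt0 : (0 < q)%N).

Definition guarantee (mu : {ffun 'I_q -> R}) : R :=
  inf ((fun nu => payoff A mu nu) @` [set nu | mixed nu]).

Lemma mixed_le1 (mu : {ffun 'I_q -> R}) x : mixed mu -> mu x <= 1.
Proof. by case=> mu_ge0 <-; rewrite (bigD1 x) //= lerDl sumr_ge0. Qed.

Lemma exists_mixed : exists nu : {ffun 'I_q -> R}, mixed nu.
Proof.
exists [ffun y => (y == Ordinal q_gt0)%:R]; split => [y|]; first by rewrite ffunE ler0n.
by under eq_bigr do rewrite ffunE -[_%:R]mulr1; rewrite sum_delta.
Qed.

Lemma payoff_ge0 (mu nu : {ffun 'I_q -> R}) : mixed mu -> mixed nu -> 0 <= payoff A mu nu.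
Proof.
move=> [mu_ge0 _] [nu_ge0 _].
by do 2!(apply: sumr_ge0 => ? _); rewrite !mulr_ge0.
Qed.

Lemma payoff_le_sum (mu nu : {ffun 'I_q -> R}) :
  mixed mu -> mixed nu -> payoff A mu nu <= \sum_x \sum_y A x y.
Proof.
move=> mu_mixed nu_mixed; apply: ler_sum => x _; apply: ler_sum => y _.
rewrite ler_piMl //; apply: mulr_ile1; [exact: mu_mixed.1|exact: nu_mixed.1|..];
  exact: mixed_le1.
Qed.

Lemma guarantee_le_value (mu : {ffun 'I_q -> R}) : mixed mu -> guarantee mu <= game_value A.
Proof.
have [nu nu_mixed] := exists_mixed.
have guarantee_le mu' : mixed mu' -> guarantee mu' <= payoff A mu' nu.
  move=> mu'_mixed; apply: ge_inf; last by exists nu.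
  by exists 0 => _ [nu' nu'_mixed <-]; apply: payoff_ge0.
move=> mu_mixed; apply: ub_le_sup; last by exists mu.
exists (\sum_x \sum_y A x y) => _ [mu' mu'_mixed <-].
exact: le_trans (guarantee_le _ mu'_mixed) (payoff_le_sum mu'_mixed nu_mixed).
Qed.

Lemma le_guarantee (mu : {ffun 'I_q -> R}) c :
  (forall nu, mixed nu -> c <= payoff A mu nu) -> c <= guarantee mu.
Proof.
move=> c_le; apply: lb_le_inf => [|_ [nu nu_mixed <-]]; last exact: c_le.
by have [nu nu_mixed] := exists_mixed; exists (payoff A mu nu), nu.
Qed.

Lemma minimax_column_strategy : exists nu : 'I_q -> R,
  [/\ forall y, 0 <= nu y, \sum_y nu y = 1 &
      forall x, \sum_y A x y * nu y <= game_value A].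
Proof.
set V := game_value A.
case: (ville_alternative (fun x y => A x y - V)) => [[nu [nu_ge0 nu_sum nu_le]]|].
  exists nu; split => // x; have := nu_le x; under eq_bigr do rewrite mulrBl.
  by rewrite sumrB -mulr_sumr nu_sum mulr1 subr_le0.
(* Normalized, a certificate [mu] for [A - V] would guarantee the row player more than [V]. *)
move=> [mu [mu_ge0 mu_gt]]; exfalso.
pose s := \sum_x mu x.
have col_ge y : 1 + V * s <= \sum_x mu x * A x y.
  by have := mu_gt y; under eq_bigr do rewrite mulrBr; rewrite sumrB -mulr_suml -/s; lra.
have s_gt0 : 0 < s.
  have s_ge0 : 0 <= s by apply: sumr_ge0.
  rewrite lt_def s_ge0 andbT; apply/eqP => s0.
  have := mu_gt (Ordinal q_gt0); rewrite big1 ?ler10 // => x _.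
  by rewrite (psumr_eq0P (fun i _ => mu_ge0 i) s0) ?mul0r.
pose mu' := [ffun x => mu x / s].
have mu'_mixed : mixed mu'.
  split=> [x|]; first by rewrite ffunE divr_ge0 // ltW.
  by under eq_bigr do rewrite ffunE; rewrite -mulr_suml divff ?gt_eqF.
suff: V + s^-1 <= guarantee mu'.
  have : 0 < s^-1 by rewrite invr_gt0.
  by have := guarantee_le_value mu'_mixed; rewrite -/V; lra.
apply: le_guarantee => nu [nu_ge0 nu_sum].
rewrite /payoff exchange_big /=.
have -> : V + s^-1 = \sum_y nu y * ((1 + V * s) / s).
  by rewrite -mulr_suml nu_sum mul1r mulrDl mul1r mulfK ?gt_eqF // addrC.
apply: ler_sum => y _.
rewrite (eq_bigr (fun x => nu y * (mu x * A x y / s))); last first.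
  by move=> x _; rewrite ffunE; ring.
by rewrite -mulr_sumr -mulr_suml ler_wpM2l // ler_wpM2r ?invr_ge0 ?(ltW s_gt0) ?col_ge.
Qed.

End GameValue.

Lemma exists_le_weighted_mean (R : realFieldType) (I : finType) (w f : I -> R) c :
  (forall i, 0 <= w i) -> \sum_i w i = 1 -> \sum_i w i * f i <= c -> exists i, f i <= c.
Proof.
move=> w_ge0 w_sum mean_le.
have [i0 _] : exists i0 : I, true.
  case: (pickP (xpredT : pred I)) => [i0 _|I0]; first by exists i0.
  by move/eqP: w_sum; rewrite big_pred0 // eq_sym oner_eq0.
have [i _ f_min] := @arg_minP _ _ I i0 xpredT f isT.
exists i; apply: le_trans mean_le.
rewrite -[f i]mul1r -w_sum mulr_suml; apply: ler_sum => j _.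
by rewrite ler_wpM2l // f_min.
Qed.

Definition nat_of_bits (b : nat) (t : nat -> bool) : nat := (\sum_(k < b) t k * 2 ^ k)%N.

Lemma nat_of_bits_onto b y : (y < 2 ^ b)%N -> exists t, nat_of_bits b t = y.
Proof.
elim: b y => [|b IH] y y_lt.
  by exists xpred0; move: y_lt; rewrite expn0 ltnS leqn0 => /eqP ->; rewrite /nat_of_bits big_ord0.
have [t t_y] : exists t, nat_of_bits b t = y./2.
  by apply: IH; rewrite ltn_half_double -mul2n -expnS.
exists (fun k => if k is k'.+1 then t k' else odd y).
rewrite /nat_of_bits big_ord_recl /= expn0 muln1.
under eq_bigr do rewrite /bump /= expnS mulnCA.
by rewrite -big_distrr /= -/(nat_of_bits b t) t_y mul2n odd_double_half.
Qed.

Section Algorithms.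
Variables (R : realType) (q : nat) (A : 'M[R]_q).

Definition const_alg (y : 'I_q) : det_alg q := fun _ _ => y.

Definition mixed_const_alg (nu : 'I_q -> R) (nu_ge0 : forall y, 0 <= nu y)
  (nu_sum : \sum_y nu y = 1) : rand_alg R q := @RandAlg R q _ nu const_alg nu_ge0 nu_sum.

Definition bits_alg (y0 : 'I_q) (b : nat) : adv_alg q :=
  fun t => const_alg (insubd y0 (nat_of_bits b t)).

Lemma bits_alg_reads y0 b : reads_at_most b (bits_alg y0 b).
Proof.
move=> t t' tt'; rewrite /bits_alg /nat_of_bits.
by under eq_bigr => k _ do rewrite (tt' k (ltn_ord k)).
Qed.

Lemma sum_cost_const_le (nu : 'I_q -> R) V n (xs : n.-tuple 'I_q) :
  (forall x, \sum_y A x y * nu y <= V) ->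
  \sum_y nu y * cost A (const_alg y) xs <= V * n%:R.
Proof.
move=> nu_opt; rewrite /cost /const_alg.
under eq_bigr do rewrite mulr_sumr; rewrite exchange_big /=.
rewrite -[n in n%:R]card_ord -sumr_const mulr_sumr; apply: ler_sum => i _.
by rewrite mulr1; under eq_bigr do rewrite mulrC; apply: nu_opt.
Qed.

End Algorithms.

Theorem theorem8 (R : realType) (q : nat) (A : 'M[R]_q) :
  (2 <= q)%N -> (forall x y, 0 <= A x y) ->
  (exists RA : rand_alg R q,
     forall (n : nat) (xs : n.-tuple 'I_q),
       exp_cost A RA xs <= game_value A * n%:R) /\
  (exists alg : adv_alg q,
     reads_at_most (up_log 2 q) alg /\
     forall (n : nat) (xs : n.-tuple 'I_q),
       exists advice : nat -> bool, cost A (alg advice) xs <= game_value A * n%:R).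
Proof.
move=> q_ge2 A_ge0; have q_gt0 : (0 < q)%N by apply: leq_trans q_ge2.
have [nu [nu_ge0 nu_sum nu_opt]] := minimax_column_strategy A_ge0 q_gt0.
have mean_le n (xs : n.-tuple 'I_q) := sum_cost_const_le xs nu_opt.
split; first by exists (mixed_const_alg nu_ge0 nu_sum) => n xs; apply: mean_le.
exists (bits_alg (Ordinal q_gt0) (up_log 2 q)); split => [|n xs]; first exact: bits_alg_reads.
have [y y_le] := exists_le_weighted_mean nu_ge0 nu_sum (mean_le n xs).
have [t t_y] := nat_of_bits_onto (leq_trans (ltn_ord y) (up_logP q (ltnSn 1))).
by exists t; rewrite /bits_alg t_y valKd.
Qed.
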